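(* Let $p$ be an odd prime and $n\geq 1$ an integer with $p>2n$, and let $G$ be an extraspecial group of order $p^{2n+1}$. Then $\mathrm{Aut}(G)$ contains no element of order $p^2$; that is, every element of $\mathrm{Aut}(G)$ of $p$-power order has order $1$ or $p$. In particular, if $p\geq 5$, no extraspecial group of order $p^5$ has an automorphism of order $p^2$.
   Context: A $p$-group $G$ is extraspecial if $Z(G)=G'=\Phi(G)$ has order $p$. *)

From mathcomp Require Import all_boot all_fingroup all_solvable.
From mathcomp Require Import pgroup maximal automorphism.
Set Implicit Arguments.
Unset Strict Implicit.
Unset Printing Implicit Defensive.

From HB Require Import structures.
From mathcomp Require Import all_boot all_algebra all_fingroup all_solvable.
From mathcomp Require Import pgroup maximal automorphism.
Set Implicit Arguments.
Unset Strict Implicit.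
Unset Printing Implicit Defensive.
Import GRing.Theory.

(* Baer's trick: as p is odd and G has class 2, x + y := x y [y, x]^(1/2)
   turns G into an abelian group B of order p^(2n+1) on which every
   automorphism a of G acts additively.  A p-element a centralizes Z(G), whose
   automorphism group has order p - 1, hence every p-th power y^p, which lies
   in Phi(G) = Z(G); so u := a - 1 satisfies p u = 0.  The binomial theorem
   then gives a^(p^k) = 1 + u^(p^k), so u is nilpotent, and the images u^j(B)
   form a strictly decreasing chain of subgroups of B, which reaches 0 after
   at most 2n+1 steps.  As 2n+1 <= p, a^p = 1 + u^p = 1. *)

Section NilpotentEndomorphism.
Local Open Scope group_scope.
Variables (T : finGroupType) (f : T -> T) (p n N : nat).
Hypotheses (fM : {morph f : x y / x * y}) (p_pr : prime p) (oT : #|T| = (p ^ n)%N).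
Hypothesis f_nil : forall x, iter N f x = 1.

Let iter_morphM k : {in [set: T] &, {morph iter k f : x y / x * y}}.
Proof. by move=> x y _ _; elim: k => //= k ->; rewrite fM. Qed.

Let I k := (Morphism (iter_morphM k) @* [set: T])%G.

Let I_E k : I k :=: iter k f @: [set: T].
Proof. by rewrite /I /= morphimEdom. Qed.

Let I_succ k : I k.+1 :=: f @: I k.
Proof. by rewrite !I_E -imset_comp; apply: eq_imset. Qed.

Let I_succ_sub k : I k.+1 \subset I k.
Proof.
rewrite !I_E; apply/subsetP => y /imsetP[x _ ->].
by rewrite -[iter _ _ _]/(iter k.+1 f x) iterSr imset_f ?inE.
Qed.

Let I_nil : I N :=: 1.
Proof.
by apply/trivgP/subsetP => y; rewrite I_E => /imsetP[x _ ->]; rewrite f_nil inE.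
Qed.

(* A chain of images that stalls is constant, hence trivial as f is nilpotent. *)
Let I_proper k : I k :!=: 1 -> I k.+1 \proper I k.
Proof.
move=> ntI; rewrite properEneq I_succ_sub andbT; apply: contra ntI => /eqP eqI.
have I_const j : I (j + k) :=: I k.
  by elim: j => // j IH; rewrite addSn I_succ IH -I_succ eqI.
have : I (N + k) \subset I N.
  elim: k {eqI I_const} => [|k IH]; first by rewrite addn0.
  by rewrite addnS; apply: subset_trans (I_succ_sub _) IH.
by rewrite I_const I_nil subG1.
Qed.

Let card_I k : #|I k| = (p ^ logn p #|I k|)%N.
Proof.
apply/card_pgroup/(pgroupS (subsetT _)).
by rewrite /pgroup cardsT oT pnatX pnat_id.
Qed.

Let I_chain k : I k :=: 1 \/ logn p #|I k| + k <= n.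
Proof.
elim: k => [|k [IH|IH]].
- by right; rewrite I_E card_imset ?cardsT ?oT ?pfactorK ?addn0.
- by left; apply/trivgP; rewrite -IH I_succ_sub.
have [I1|ntI] := eqVneq (I k.+1 : {set T}) 1; [by left | right].
have ntIk : I k :!=: 1.
  by apply: contra ntI => /eqP Ik1; rewrite -subG1 -Ik1 I_succ_sub.
have lt_lg : logn p #|I k.+1| < logn p #|I k|.
  by rewrite -(ltn_exp2l _ _ (prime_gt1 p_pr)) -!card_I proper_card ?I_proper.
by rewrite addnS; apply: leq_trans IH; rewrite ltn_add2r.
Qed.

Lemma iter_nil_morph_pgroup x : iter n f x = 1.
Proof.
have I_n : I n :=: 1.
  have [//|] := I_chain n; rewrite -[X in _ <= X]add0n leq_add2r leqn0 => /eqP lg0.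
  by apply/eqP; rewrite trivg_card1 card_I lg0.
have : iter n f x \in I n by rewrite I_E imset_f ?inE.
by rewrite I_n => /set1P.
Qed.

End NilpotentEndomorphism.

Section UnipotentAdditive.
Local Open Scope ring_scope.
Variable B : zmodType.
Implicit Type u : {additive B -> B}.

Lemma iter_is_zmod_morphism u k : zmod_morphism (iter k u).
Proof. by elim: k => // k IH x y /=; rewrite IH raddfB. Qed.

HB.instance Definition _ u k :=
  GRing.isZmodMorphism.Build B B (iter k u) (iter_is_zmod_morphism u k).

Lemma iter_unipotent_binomial u k x :
  iter k (fun y => y + u y) x = \sum_(j < k.+1) iter j u x *+ 'C(k, j).
Proof.
elim: k => [|k IH]; first by rewrite big_ord1.
rewrite [LHS]/= IH raddf_sum big_ord_recl [in RHS]big_ord_recl /= !bin0 -addrA.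
congr (_ + _); under [in RHS]eq_bigr => i _ do rewrite binS mulrnDr.
rewrite big_split /=; congr (_ + _).
  by rewrite [RHS]big_ord_recr /= bin_small // mulr0n addr0.
by apply: eq_bigr => i _; rewrite raddfMn.
Qed.

Lemma iter_unipotent_prime u p x : prime p -> (forall y, u y *+ p = 0) ->
  iter p (fun y => y + u y) x = x + iter p u x.
Proof.
move=> p_pr pu; rewrite iter_unipotent_binomial big_ord_recr /= binn mulr1n.
congr (_ + _); case: p p_pr pu => // p p_pr pu.
rewrite big_ord_recl /= bin0 mulr1n big1 ?addr0 // => i _.
have /dvdnP[c ->] : (p.+1 %| 'C(p.+1, bump 0 i))%N.
  by apply: prime_dvd_bin; rewrite // /bump /= add1n ltnS ltn_ord.
by rewrite mulnC mulrnA /bump /= pu mul0rn.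
Qed.

Lemma iter_unipotent_pexp u p e x : prime p -> (forall y, u y *+ p = 0) ->
  iter (p ^ e) (fun y => y + u y) x = x + iter (p ^ e) u x.
Proof.
move=> p_pr; elim: e u x => [|e IH] u x pu; first by rewrite expn0.
rewrite expnSr !iterM (eq_iter (fun y => iter_unipotent_prime y p_pr pu)) IH //.
by case: p p_pr pu {IH} => // p _ pu y /=; rewrite pu.
Qed.

End UnipotentAdditive.

Lemma unipotent_exp_prime (B : finZmodType) (u : {additive B -> B}) p m e :
  prime p -> #|B| = (p ^ m)%N -> m <= p -> (forall x, (u x *+ p = 0)%R) ->
  (forall x, iter (p ^ e) (fun y => y + u y)%R x = x) ->
  forall x, iter p (fun y => y + u y)%R x = x.
Proof.
move=> p_pr oB le_mp pu unip_e x.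
have u_nil y : iter (p ^ e) u y = 0%R.
  by apply: (addrI y); rewrite -iter_unipotent_pexp // unip_e addr0.
have u_m y : iter m u y = 0%R := iter_nil_morph_pgroup (raddfD u) p_pr oB u_nil y.
by rewrite iter_unipotent_prime // -(subnK le_mp) iterD u_m raddf0 addr0.
Qed.

Local Open Scope group_scope.

Lemma Aut_astabs_char (gT : finGroupType) (G H : {group gT}) a :
  H \char G -> a \in Aut G -> a \in 'N(H | 'P).
Proof.
move=> chHG AutGa; have aH : a @: H = H.
  case/charP: (chHG) => _ /(_ _ (injm_autm AutGa) (im_autm AutGa)).
  by rewrite morphimEsub ?autmE // (subset_trans (char_sub chHG)).
by apply/astabsP => x; rewrite /= apermE -{1}aH mem_imset //; apply: perm_inj.
Qed.

Lemma Aut_pelt_fix_char_prime (gT : finGroupType) (G H : {group gT}) p a :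
  prime p -> H \char G -> #|H| = p -> a \in Aut G -> p.-elt a ->
  {in H, forall z, a z = z}.
Proof.
move=> p_pr chHG oH AutGa pa z Hz.
have nHa := Aut_astabs_char chHG AutGa.
have r_dvd_p1 : #[restr_perm H a] %| p.-1.
  rewrite -totient_prime // -oH -card_Aut_cyclic ?prime_cyclic ?oH //.
  exact/order_dvdG/Aut_restr_perm/AutGa/char_sub.
have r_dvd_a : #[restr_perm H a] %| #[a] by apply: morph_order.
have [k oa] := p_natP pa.
have : coprime #[a] p.-1.
  rewrite oa coprimeXl // prime_coprime // gtnNdvd //.
    by rewrite -subn1 subn_gt0 prime_gt1.
  by rewrite prednK ?prime_gt0.
move=> /eqP a_p1; have : #[restr_perm H a] %| 1.
  by rewrite -a_p1 dvdn_gcd r_dvd_a r_dvd_p1.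
by rewrite dvdn1 order_eq1 => /eqP r1; rewrite -(restr_permE nHa Hz) r1 perm1.
Qed.

Section BaerTrick.
Local Open Scope group_scope.
Variables (gT : finGroupType) (G : {group gT}).
Hypotheses (sG'Z : G^`(1) \subset 'Z(G)) (oddG' : odd #|G^`(1)|).

Let commg_center x y : x \in G -> y \in G -> [~ x, y] \in 'Z(G).
Proof. by move=> xG yG; rewrite (subsetP sG'Z) ?mem_commg. Qed.

Let center_commute z x : z \in 'Z(G) -> x \in G -> commute z x.
Proof. by case/centerP=> _ cGz /cGz. Qed.

Let center_sub_elt z : z \in 'Z(G) -> z \in G.
Proof. exact: subsetP (center_sub G) z. Qed.

Let commZg z x : z \in 'Z(G) -> x \in G -> [~ z, x] = 1.
Proof. by move=> Zz xG; apply/eqP/commgP/center_commute. Qed.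

Let commgZ x z : x \in G -> z \in 'Z(G) -> [~ x, z] = 1.
Proof. by move=> xG Zz; apply/eqP/commgP/commute_sym/center_commute. Qed.

Lemma commMg_class2 x y z : x \in G -> y \in G -> z \in G ->
  [~ x * y, z] = [~ x, z] * [~ y, z].
Proof.
move=> xG yG zG; rewrite commMgJ; congr (_ * _).
by apply/conjg_fixP/commgP/center_commute; rewrite ?commg_center.
Qed.

Lemma commgM_class2 x y z : x \in G -> y \in G -> z \in G ->
  [~ x, y * z] = [~ x, y] * [~ x, z].
Proof.
move=> xG yG zG; rewrite commgMJ (conjg_fixP _); last first.
  by apply/commgP/center_commute; rewrite ?commg_center.
by apply: center_commute; rewrite ?commg_center ?groupR.
Qed.

(* half inverts 2 modulo #|G'|, so [~ x, y] ^+ half is a square root of [~ x, y]. *)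
Let half := (#|G^`(1)|).+1./2.

Let commg_half2 x y : x \in G -> y \in G -> [~ x, y] ^+ half.*2 = [~ x, y].
Proof.
move=> xG yG; rewrite /half halfK /= oddG' subn0 expgS expg_cardG ?mulg1 //.
exact: mem_commg.
Qed.

Variant baer : predArgType := Baer x of x \in G.
Definition baer_val (b : baer) := let: Baer x _ := b in x.
HB.instance Definition _ := [isSub for baer_val].
HB.instance Definition _ := [Finite of baer by <:].

Lemma baer_valP (b : baer) : baer_val b \in G. Proof. by case: b. Qed.

Definition baer_mul (x y : gT) := x * y * [~ y, x] ^+ half.

Lemma baer_mul_in x y : x \in G -> y \in G -> baer_mul x y \in G.
Proof. by move=> xG yG; rewrite !groupM ?groupX ?groupR. Qed.

Definition baer_add (b c : baer) := Baer (baer_mul_in (baer_valP b) (baer_valP c)).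
Definition baer_zero := Baer (group1 G).
Definition baer_opp (b : baer) := Baer (groupVr (baer_valP b)).

Lemma baer_addA : associative baer_add.
Proof.
move=> [x xG] [y yG] [z zG]; apply: val_inj; rewrite /= /baer_mul.
have Zyx : [~ y, x] ^+ half \in 'Z(G) by rewrite groupX ?commg_center.
have Zzx : [~ z, x] ^+ half \in 'Z(G) by rewrite groupX ?commg_center.
have Zzy : [~ z, y] ^+ half \in 'Z(G) by rewrite groupX ?commg_center.
rewrite !commMg_class2 ?groupM ?(center_sub_elt Zzy) ?(commZg Zzy xG) ?mulg1 //.
rewrite !commgM_class2 ?groupM ?(center_sub_elt Zyx) ?(commgZ zG Zyx) ?mulg1 //.
rewrite (expgMn _ (center_commute (commg_center yG xG) (groupR zG xG))).
rewrite (expgMn _ (center_commute (commg_center zG xG) (groupR zG yG))).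
move: Zyx Zzx Zzy; set a := _ ^+ half; set b := _ ^+ half; set c := _ ^+ half.
move=> Za Zb Zc.
rewrite -[in RHS](mulgA (x * y) a z) (center_commute Za zG) !mulgA -!mulgA.
do 3 congr (_ * _); rewrite [RHS]mulgA.
exact: center_commute Zc (groupM (center_sub_elt Za) (center_sub_elt Zb)).
Qed.

Lemma baer_addC : commutative baer_add.
Proof.
move=> [x xG] [y yG]; apply: val_inj; rewrite /= /baer_mul.
rewrite [x * y]commgC -mulgA; congr (_ * _).
by rewrite -(invg_comm x y) expgVn -{1}(commg_half2 xG yG) -addnn expgD mulgK.
Qed.

Lemma baer_add0 : left_id baer_zero baer_add.
Proof.
by move=> [x xG]; apply: val_inj; rewrite /= /baer_mul mul1g commg1 expg1n !mulg1.
Qed.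

Lemma baer_addN : left_inverse baer_zero baer_opp baer_add.
Proof.
by move=> [x xG]; apply: val_inj; rewrite /= /baer_mul mulVg commgVg expg1n mulg1.
Qed.

HB.instance Definition _ :=
  GRing.isZmodule.Build baer baer_addA baer_addC baer_add0 baer_addN.

Lemma baer_valMn b k : baer_val (b *+ k)%R = baer_val b ^+ k.
Proof.
elim: k => // k IH; rewrite GRing.mulrS /= IH /baer_mul.
have /commgP/eqP -> : commute (baer_val b ^+ k) (baer_val b).
  exact/commute_sym/commuteX.
by rewrite expg1n mulg1 -expgS.
Qed.

Section BaerAutomorphism.
Variables (a : {perm gT}) (AutGa : a \in Aut G).

Definition baer_aut (b : baer) := Baer (Aut_closed AutGa (baer_valP b)).

Lemma baer_aut_is_nmod_morphism : GRing.nmod_morphism baer_aut.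
Proof.
split; first by apply: val_inj; rewrite /= -(autmE AutGa) morph1.
move=> [x xG] [y yG]; apply: val_inj; rewrite /= /baer_mul -(autmE AutGa).
by rewrite !morphM ?morphX ?morphR ?groupM ?groupX ?groupR ?groupV.
Qed.

HB.instance Definition _ :=
  GRing.isNmodMorphism.Build baer baer baer_aut baer_aut_is_nmod_morphism.

Lemma Aut_class2_expp p m : prime p -> #|G| = (p ^ m)%N -> m <= p ->
  p.-elt a -> {in G, forall y, a (y ^+ p) = y ^+ p} -> a ^+ p = 1.
Proof.
move=> p_pr oG le_mp pa a_fix.
pose u := (baer_aut \- idfun)%R.
have baer_autE b : (b + u b)%R = baer_aut b by rewrite /= addrC subrK.
have iter_autE k b : val (iter k baer_aut b) = (a ^+ k) (val b).
  by rewrite permX; elim: k => //= k <-.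
have pu b : (u b *+ p)%R = 0%R.
  apply/eqP; rewrite -raddfMn /= subr_eq0; apply/eqP/val_inj.
  by rewrite /= baer_valMn a_fix ?baer_valP.
have [e oa] := p_natP pa.
have unip_e b : iter (p ^ e) (fun y => y + u y)%R b = b.
  rewrite (eq_iter baer_autE); apply: val_inj.
  by rewrite iter_autE -oa expg_order perm1.
have oB : #|baer| = (p ^ m)%N by rewrite card_sub -oG.
have unip_p := unipotent_exp_prime p_pr oB le_mp pu unip_e.
apply/permP => x; rewrite perm1; have [xG|xNG] := boolP (x \in G).
  have := unip_p (Baer xG); rewrite (eq_iter baer_autE) => /(congr1 baer_val).
  by rewrite iter_autE.
by rewrite (out_Aut (groupX p AutGa) xNG).
Qed.

End BaerAutomorphism.
End BaerTrick.

Lemma expp_center_special (gT : finGroupType) (G : {group gT}) (p : nat) y :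
  p.-group G -> special G -> y \in G -> y ^+ p \in 'Z(G).
Proof.
move=> pG [<- _] yG.
by rewrite (Phi_joing pG) mem_gen // inE orbC (Mho_p_elt 1) ?(mem_p_elt pG).
Qed.

Theorem theorem3p3 (gT : finGroupType) (G : {group gT}) (p n : nat) :
  prime p -> odd p -> 1 <= n -> 2 * n < p ->
  pgroup p G -> extraspecial G -> #|G| = (p ^ (2 * n + 1))%N ->
  (forall a : {perm gT}, a \in Aut G -> #[a]%g <> (p ^ 2)%N) /\
  (forall a : {perm gT}, a \in Aut G -> p_elt p a -> #[a]%g = 1%N \/ #[a]%g = p).
Proof.
move=> p_pr p_odd _ lt_2n_p pG esG oG.
have oZ := card_center_extraspecial pG esG.
have [[_ G'Z] _] := esG.
have le_mp : 2 * n + 1 <= p by rewrite addn1.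
have expp a : a \in Aut G -> p.-elt a -> a ^+ p = 1.
  move=> AutGa pa; apply: (Aut_class2_expp _ _ AutGa p_pr oG); rewrite ?G'Z ?oZ //.
  move=> y yG; apply: (Aut_pelt_fix_char_prime p_pr (center_char G) oZ AutGa pa).
  exact: expp_center_special esG.1 yG.
split=> [a AutGa oa | a AutGa pa].
  have pa : p.-elt a by rewrite /p_elt oa pnatX pnat_id.
  have : #[a] %| p by rewrite order_dvdn expp.
  rewrite oa => /(dvdn_leq (prime_gt0 p_pr)); apply/negP.
  by rewrite -ltnNge -{1}(expn1 p) ltn_exp2l ?prime_gt1.
have : #[a] %| p by rewrite order_dvdn expp.
by case/primeP: p_pr => _ /[apply] /orP[] /eqP; [left | right].
Qed.
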